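(* Let $x_i$ be a real variable and let $\mathcal{I}_i=\{\langle l^1,u^1\rangle,\dots,\langle l^m,u^m\rangle\}$ be a finite, nonempty set of partitions of its domain, where each partition is an interval with lower end $l^k$ and upper end $u^k$, $l^k<u^k$. Write $\mathbf{x}_i^l=(l^1,\dots,l^m)\in\mathbb{R}^m$, $\mathbf{x}_i^u=(u^1,\dots,u^m)\in\mathbb{R}^m$, and let $\mathbf{1}\in\mathbb{R}^m$ be the all-ones vector. Define the piecewise quadratic relaxation $$\langle x_i\rangle^{MC_q(\mathcal{I})}=\Big\{(x_i,\widehat{x}_i,\widehat{\mathbf{y}}_i)\in\mathbb{R}\times\mathbb{R}\times\{0,1\}^m:\ \widehat{x}_i\geqslant x_i^2,\ \widehat{x}_i\leqslant\big((\mathbf{x}_i^l\cdot\widehat{\mathbf{y}}_i)+(\mathbf{x}_i^u\cdot\widehat{\mathbf{y}}_i)\big)x_i-(\mathbf{x}_i^l\cdot\widehat{\mathbf{y}}_i)(\mathbf{x}_i^u\cdot\widehat{\mathbf{y}}_i),\ \widehat{\mathbf{y}}_i\cdot\mathbf{1}=1\Big\}$$ and the piecewise McCormick relaxation of the product $x_i\cdot x_i$ $$\langle x_i,x_i\rangle^{MC(\mathcal{I})}=\Big\{(x_i,\widehat{x}_i,\widehat{\mathbf{y}}_i)\in\mathbb{R}\times\mathbb{R}\times\{0,1\}^m:\ \widehat{x}_i\geqslant 2(\mathbf{x}_i^l\cdot\widehat{\mathbf{y}}_i)x_i-(\mathbf{x}_i^l\cdot\widehat{\mathbf{y}}_i)^2,\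 \widehat{x}_i\geqslant 2(\mathbf{x}_i^u\cdot\widehat{\mathbf{y}}_i)x_i-(\mathbf{x}_i^u\cdot\widehat{\mathbf{y}}_i)^2,$$ $$\widehat{x}_i\leqslant\big((\mathbf{x}_i^l\cdot\widehat{\mathbf{y}}_i)+(\mathbf{x}_i^u\cdot\widehat{\mathbf{y}}_i)\big)x_i-(\mathbf{x}_i^l\cdot\widehat{\mathbf{y}}_i)(\mathbf{x}_i^u\cdot\widehat{\mathbf{y}}_i),\ \widehat{\mathbf{y}}_i\cdot\mathbf{1}=1\Big\}.$$ Then $\langle x_i\rangle^{MC_q(\mathcal{I})}\subsetneq\langle x_i,x_i\rangle^{MC(\mathcal{I})}$, i.e. the first set is contained in the second and the containment is strict.
   Context: For vectors $\mathbf{a},\mathbf{b}\in\mathbb{R}^m$, $\mathbf{a}\cdot\mathbf{b}=\sum_{k=1}^m a_kb_k$. The binary vector $\widehat{\mathbf{y}}_i$ selects exactly one active partition of $x_i$; $\widehat{x}_i$ is a lifted variable representing $x_i^2$. These sets are the piecewise convex relaxations used for a square term $x_i^2$ (the first) and for the bilinear term $x_ix_j$ specialized to $j=i$ with a common binary selection vector (the second). *)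

From HB Require Import structures.
From mathcomp Require Import all_boot all_order all_algebra.
From mathcomp Require Import boolp classical_sets reals.
Set Implicit Arguments. Unset Strict Implicit. Unset Printing Implicit Defensive.
Import Order.TTheory GRing.Theory Num.Theory.
Local Open Scope ring_scope.
Local Open Scope classical_set_scope.

Definition dotv (R : realType) (m : nat) (a b : 'I_m -> R) : R :=
  \sum_(k < m) a k * b k.

Definition onesv (R : realType) (m : nat) : 'I_m -> R := fun _ => 1.

Definition binvec (R : realType) (m : nat) (y : 'I_m -> R) : Prop :=
  forall k, y k = 0 \/ y k = 1.

Definition MCq (R : realType) (m : nat) (xl xu : 'I_m -> R)
  : set (R * R * ('I_m -> R)) :=
  [set p | let: (x, xh, y) := p in
     binvec y /\
     x ^+ 2 <= xh /\
     xh <= (dotv xl y + dotv xu y) * x - dotv xl y * dotv xu y /\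
     dotv y (@onesv R m) = 1].

Definition MC (R : realType) (m : nat) (xl xu : 'I_m -> R)
  : set (R * R * ('I_m -> R)) :=
  [set p | let: (x, xh, y) := p in
     binvec y /\
     2 * dotv xl y * x - (dotv xl y) ^+ 2 <= xh /\
     2 * dotv xu y * x - (dotv xu y) ^+ 2 <= xh /\
     xh <= (dotv xl y + dotv xu y) * x - dotv xl y * dotv xu y /\
     dotv y (@onesv R m) = 1].

From HB Require Import structures.
From mathcomp Require Import all_boot all_order all_algebra.
From mathcomp Require Import boolp classical_sets reals.
From mathcomp Require Import ring lra.
Set Implicit Arguments. Unset Strict Implicit. Unset Printing Implicit Defensive.
Import Order.TTheory GRing.Theory Num.Theory.
Local Open Scope ring_scope.
Local Open Scope classical_set_scope.

(* The constraints of MC are the two tangents of x^2 at the active interval's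
   end points l, u and the chord through them; the tangents lie below x^2, so
   MCq is contained in MC.  At the midpoint x = (l + u) / 2 both tangents take
   the value l u, which the chord dominates, so (x, l u) lies in MC, while
   x^2 > l u by strict AM-GM as l < u: this point separates the two sets. *)

Section QuadraticBounds.
Variable R : realFieldType.
Implicit Types a b x : R.

Lemma tangent_le_sqr a x : 2 * a * x - a ^+ 2 <= x ^+ 2.
Proof.
rewrite -subr_ge0.
have -> : x ^+ 2 - (2 * a * x - a ^+ 2) = (x - a) ^+ 2 by ring.
exact: sqr_ge0.
Qed.

Lemma tangent_midpoint a b : 2 * a * ((a + b) / 2) - a ^+ 2 = a * b.
Proof. by field. Qed.

Lemma tangent_midpointr a b : 2 * b * ((a + b) / 2) - b ^+ 2 = a * b.
Proof. by rewrite [a + b]addrC tangent_midpoint mulrC. Qed.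

Lemma mul_le_chord_midpoint a b : a * b <= (a + b) * ((a + b) / 2) - a * b.
Proof.
have [agm _] := leif_AGM2 a b.
have -> : (a + b) * ((a + b) / 2) - a * b = 2 * ((a + b) / 2) ^+ 2 - a * b.
  by field.
lra.
Qed.

Lemma mul_lt_sqr_midpoint a b : a != b -> a * b < ((a + b) / 2) ^+ 2.
Proof. by move=> neq_ab; rewrite (lt_leif (leif_AGM2 a b)) neq_ab. Qed.

End QuadraticBounds.

Section Selection.
Variables (R : realType) (m : nat).
Implicit Types a b : 'I_m -> R.

Definition deltav (k0 : 'I_m) : 'I_m -> R := fun k => (k == k0)%:R.

Lemma dotvC a b : dotv a b = dotv b a.
Proof. by apply: eq_bigr => k _; rewrite mulrC. Qed.

Lemma dotv_deltar a k0 : dotv a (deltav k0) = a k0.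
Proof.
rewrite /dotv (bigD1 k0) //= /deltav eqxx mulr1 big1 ?addr0 // => k /negbTE ->.
by rewrite mulr0.
Qed.

Lemma dotv_delta_ones k0 : dotv (deltav k0) (@onesv R m) = 1.
Proof. by rewrite dotvC dotv_deltar. Qed.

Lemma binvec_deltav k0 : binvec (deltav k0).
Proof. by move=> k; rewrite /deltav; case: (k == k0); [right | left]. Qed.

End Selection.

Section Relaxations.
Variables (R : realType) (m : nat) (xl xu : 'I_m -> R).

Lemma MCq_sub_MC : MCq xl xu `<=` MC xl xu.
Proof.
move=> [[x xh] y] /= [bin_y [sqr_le_xh [xh_le_chord sum_y]]].
have tangent_le_xh a : 2 * a * x - a ^+ 2 <= xh.
  exact: le_trans (tangent_le_sqr a x) sqr_le_xh.
by do !split.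
Qed.

Definition midpoint_point (k : 'I_m) : R * R * ('I_m -> R) :=
  ((xl k + xu k) / 2, xl k * xu k, deltav R k).

Lemma midpoint_point_in_MC k : MC xl xu (midpoint_point k).
Proof.
rewrite /MC /midpoint_point /= !dotv_deltar dotv_delta_ones.
split; first exact: binvec_deltav.
rewrite tangent_midpoint tangent_midpointr.
by do !split=> //; apply: mul_le_chord_midpoint.
Qed.

Lemma midpoint_point_notin_MCq k : xl k != xu k -> ~ MCq xl xu (midpoint_point k).
Proof.
move=> neq_lu; rewrite /MCq /midpoint_point /= => -[_ [sqr_le _]].
by move: (mul_lt_sqr_midpoint neq_lu); rewrite ltNge sqr_le.
Qed.

End Relaxations.

Theorem lemma1 (R : realType) (m : nat) (xl xu : 'I_m -> R) :
  (0 < m)%N ->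
  (forall k, xl k < xu k) ->
  MCq xl xu `<` MC xl xu.
Proof.
move=> m_gt0 lt_lu; split; first exact: MCq_sub_MC.
pose k : 'I_m := Ordinal m_gt0.
move=> /(_ _ (midpoint_point_in_MC xl xu k)).
by apply: midpoint_point_notin_MCq; rewrite lt_eqF.
Qed.
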